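(* Let $\mathcal{X}\subseteq\{0,1\}^n$ be nonempty, $\hat c\in\mathbb{R}^n$, $C\in\mathbb{R}^{n\times m}$, and for $\lambda\ge 0$ let $\mathcal{U}(\lambda)=\{\hat c+C\xi:\xi\in\mathbb{R}^m,\ \|\xi\|_2\le\lambda\}$. Let $\Lambda\subseteq\mathbb{R}_{\ge 0}$ and $w:\Lambda\to\mathbb{R}_{\ge0}$ be such that $\int_\Lambda w(\lambda)\,d\lambda$ and $\int_\Lambda \lambda w(\lambda)\,d\lambda$ are finite, and define \[ val(x)=\int_\Lambda w(\lambda)\Big(\max_{c\in\mathcal{U}(\lambda)} c^t x\Big)\,d\lambda . \] Then there exists $\lambda'\ge 0$ such that every optimal solution of the single robust problem $\min_{x\in\mathcal{X}}\max_{c\in\mathcal{U}(\lambda')}c^tx$ is an optimal solution of $\min_{x\in\mathcal{X}} val(x)$; that is, an optimal solution of the latter problem can be found by solving a single robust problem with ellipsoidal uncertainty.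
   Context: This is the compromise approach to variable-sized (ellipsoidal) uncertainty for min-max robust combinatorial optimization with nominal problem $\min\{c^tx:x\in\mathcal{X}\}$. *)

From HB Require Import structures.
From mathcomp Require Import all_boot all_order all_algebra.
From mathcomp Require Import all_classical all_reals all_analysis.
Set Implicit Arguments. Unset Strict Implicit. Unset Printing Implicit Defensive.
Import Order.TTheory GRing.Theory Num.Theory.
Local Open Scope classical_set_scope.
Local Open Scope ring_scope.

Definition vec01 (R : realType) (n : nat) (x : {ffun 'I_n -> bool}) : 'cV[R]_n :=
  \col_i (x i)%:R.

Definition dotv (R : realType) (n : nat) (c x : 'cV[R]_n) : R :=
  \sum_(i < n) c i 0 * x i 0.

Definition norm2 (R : realType) (m : nat) (xi : 'cV[R]_m) : R :=
  Num.sqrt (\sum_(i < m) xi i 0 ^+ 2).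

Definition Uset (R : realType) (n m : nat) (hatc : 'cV[R]_n) (C : 'M[R]_(n, m))
  (lam : R) : set 'cV[R]_n :=
  [set hatc + C *m xi | xi in [set xi : 'cV[R]_m | norm2 xi <= lam]].

(* worst-case objective max_{c in U(lambda)} c^t x (as a supremum; the set is
   compact and nonempty for lambda >= 0, so this is the maximum) *)
Definition robval (R : realType) (n m : nat) (hatc : 'cV[R]_n) (C : 'M[R]_(n, m))
  (lam : R) (x : {ffun 'I_n -> bool}) : R :=
  sup [set dotv c (vec01 R x) | c in Uset hatc C lam].

Definition valf (R : realType) (n m : nat) (hatc : 'cV[R]_n) (C : 'M[R]_(n, m))
  (Lam : set R) (w : R -> R) (x : {ffun 'I_n -> bool}) : \bar R :=
  (\int[@lebesgue_measure R]_(l in Lam) (w l * robval hatc C l x)%:E)%E.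

Definition is_opt (T : finType) (d : Order.disp_t) (V : porderType d) (X : {set T}) (f : T -> V) (x : T) : Prop :=
  x \in X /\ forall y, y \in X -> (f x <= f y)%O.

From HB Require Import structures.
From mathcomp Require Import all_boot all_order all_algebra.
From mathcomp Require Import all_classical all_reals all_analysis.
From mathcomp Require Import measurable_realfun.
From mathcomp Require Import ring.
Import Order.TTheory GRing.Theory Num.Theory.
Local Open Scope classical_set_scope.
Local Open Scope ring_scope.

(* For lambda >= 0 the worst case over U(lambda) is affine in lambda:
   max_{c in U(lambda)} c^t x = hatc^t x + lambda * beta(x), where beta(x) is
   the supremum of (C xi)^t x over the unit ball.  Integrating against w gives
   val(x) = W * hatc^t x + L * beta(x) with W = int w and L = int lambda w,
   i.e. val(x) = W * robval(L / W)(x), a nonnegative multiple of the robust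
   objective at the weighted mean lambda' = L / W.  If W = 0, then w vanishes
   almost everywhere, so L = 0 and val is identically 0. *)

Lemma is_opt_homo (T : finType) (d d' : Order.disp_t) (V : porderType d)
    (V' : porderType d') (X : {set T}) (f : T -> V) (g : T -> V') (x : T) :
  (forall y z, (f y <= f z)%O -> (g y <= g z)%O) ->
  is_opt X f x -> is_opt X g x.
Proof. by move=> fg [xX xopt]; split=> // y /xopt /fg. Qed.

Section affine_sup.
Context {R : realType}.

Lemma sup_affine (A : set R) (a k : R) : 0 < k -> has_sup A ->
  sup [set a + k * t | t in A] = a + k * sup A.
Proof.
move=> k_gt0 [[t0 At0] ubA]; have supA := ub_le_sup ubA.
have ub_image : ubound [set a + k * t | t in A] (a + k * sup A).
  by move=> _ [t At <-]; rewrite lerD2l ler_pM2l //; exact: supA.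
have nz_image : [set a + k * t | t in A] !=set0 by exists (a + k * t0), t0.
apply/le_anti/andP; split; first exact: ge_sup.
rewrite -lerBrDl mulrC -ler_pdivlMr //; apply: ge_sup => [|t At]; first by exists t0.
rewrite ler_pdivlMr // lerBrDl mulrC.
by apply: ub_le_sup; [exists (a + k * sup A) | exists t].
Qed.

Variables (V : lmodType R) (N : V -> R) (f : V -> R) (K : R).
Hypotheses (NZ : forall k v, N (k *: v) = `|k| * N v)
           (fZ : forall k v, f (k *: v) = k * f v)
           (K_ge0 : 0 <= K) (f_le : forall v, f v <= K * N v).

Let N0 : N 0 = 0.
Proof. by rewrite -(scale0r 0) NZ normr0 mul0r. Qed.

Let f0 : f 0 = 0.
Proof. by rewrite -(scale0r 0) fZ mul0r. Qed.

Lemma has_sup_unit_ball : has_sup [set f v | v in [set v | N v <= 1]].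
Proof.
split; first by exists (f 0), 0; rewrite //= N0.
exists K => _ [v Nv1 <-]; apply: le_trans (f_le v) _.
by rewrite -[leRHS]mulr1 ler_wpM2l.
Qed.

Lemma sup_affine_ball (a l : R) : 0 <= l ->
  sup [set a + f v | v in [set v | N v <= l]] =
  a + l * sup [set f v | v in [set v | N v <= 1]].
Proof.
rewrite le_eqVlt => /orP[/eqP <-|l_gt0].
  have ub_a : ubound [set a + f v | v in [set v | N v <= 0]] a.
    move=> _ [v Nv0 <-]; rewrite gerDl; apply: le_trans (f_le v) _.
    exact: mulr_ge0_le0.
  have a_in : [set a + f v | v in [set v | N v <= 0]] a.
    by exists 0; [rewrite /= N0 | rewrite f0 addr0].
  rewrite mul0r addr0; apply/le_anti/andP; split.
    by apply: ge_sup ub_a; exists a.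
  by apply: ub_le_sup; first exists a.
have l_ge0 := ltW l_gt0.
rewrite -sup_affine //; last exact: has_sup_unit_ball.
congr sup; apply/seteqP; split=> [_ [v /= Nv <-]|_ [_ [v /= Nv <-] <-]].
- exists (f (l^-1 *: v)); last by rewrite fZ mulrA divff ?mul1r ?gt_eqF.
  exists (l^-1 *: v) => //=.
  by rewrite NZ ger0_norm ?invr_ge0 // ler_pdivrMl // mulr1.
- exists (l *: v); last by rewrite fZ.
  by rewrite /= NZ ger0_norm // ler_piMr.
Qed.

End affine_sup.

Section ellipsoid.
Context {R : realType} {n m : nat}.
Implicit Types (xi : 'cV[R]_m) (c v : 'cV[R]_n).

Lemma dotvDl c1 c2 v : dotv (c1 + c2) v = dotv c1 v + dotv c2 v.
Proof. by rewrite /dotv -big_split; apply: eq_bigr => i _; rewrite mxE mulrDl. Qed.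

Lemma dotvZl (k : R) c v : dotv (k *: c) v = k * dotv c v.
Proof. by rewrite /dotv mulr_sumr; apply: eq_bigr => i _; rewrite mxE mulrA. Qed.

Lemma norm2Z (k : R) xi : norm2 (k *: xi) = `|k| * norm2 xi.
Proof.
rewrite /norm2 (eq_bigr (fun i => k ^+ 2 * xi i 0 ^+ 2)); last first.
  by move=> i _; rewrite mxE exprMn.
by rewrite -mulr_sumr sqrtrM ?sqr_ge0 // sqrtr_sqr.
Qed.

Lemma coord_le_norm2 xi j : `|xi j 0| <= norm2 xi.
Proof.
rewrite /norm2 -sqrtr_sqr; apply: ler_wsqrtr.
by rewrite (bigD1 j) //= lerDl; apply: sumr_ge0 => i _; exact: sqr_ge0.
Qed.

Lemma dotv_mulmx_le (C : 'M[R]_(n, m)) v xi :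
  dotv (C *m xi) v <= (\sum_i \sum_j `|C i j| * `|v i 0|) * norm2 xi.
Proof.
apply: le_trans (ler_norm _) _; rewrite /dotv mulr_suml.
apply: le_trans (ler_norm_sum _ _ _) _; apply: ler_sum => i _.
rewrite mxE !mulr_suml; apply: le_trans (ler_norm_sum _ _ _) _.
apply: ler_sum => j _; rewrite !normrM [leRHS]mulrAC.
by apply: ler_wpM2r => //; apply: ler_wpM2l => //; exact: coord_le_norm2.
Qed.

Definition robslope (C : 'M[R]_(n, m)) (x : {ffun 'I_n -> bool}) : R :=
  sup [set dotv (C *m xi) (vec01 R x) | xi in [set xi | norm2 xi <= 1]].

Lemma robvalE (hatc : 'cV[R]_n) (C : 'M[R]_(n, m)) (l : R) x : 0 <= l ->
  robval hatc C l x = dotv hatc (vec01 R x) + l * robslope C x.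
Proof.
move=> l_ge0; rewrite /robval /Uset image_comp.
under eq_imagel do rewrite /= dotvDl.
apply: (@sup_affine_ball R _ _ _ _ norm2Z _ _ (dotv_mulmx_le C (vec01 R x))) => //.
- by move=> k xi; rewrite -scalemxAr dotvZl.
- by apply: sumr_ge0 => i _; apply: sumr_ge0 => j _; rewrite mulr_ge0.
Qed.

End ellipsoid.

Lemma integral_mul_eq0 (R : realType) d (T : measurableType d)
    (mu : {measure set T -> \bar R}) (D : set T) (f g : T -> R) :
  measurable D -> (forall t, D t -> 0 <= f t) ->
  measurable_fun D (fun t => (f t)%:E) ->
  measurable_fun D (fun t => (g t * f t)%:E) ->
  (\int[mu]_(t in D) (f t)%:E = 0)%E ->
  (\int[mu]_(t in D) (g t * f t)%:E = 0)%E.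
Proof.
move=> mD f_ge0 mf mgf intf0.
have f_ae0 : ae_eq mu D (fun t => (f t)%:E) (cst 0%E).
  apply/(ae_eq_integral_abs mu mD mf); rewrite -intf0.
  by apply: eq_integral => t /set_mem Dt; rewrite gee0_abs // lee_fin f_ge0.
rewrite (ae_eq_integral (cst 0%E)) ?integral0 //.
by apply: filterS f_ae0 => t f0 Dt; rewrite /= EFinM (f0 Dt) mule0.
Qed.

(* When w vanishes a.e. both integrals are 0 and this is 0 / 0 = 0. *)
Definition mean_lambda {R : realType} (Lam : set R) (w : R -> R) : R :=
  fine (\int[@lebesgue_measure R]_(l in Lam) (l * w l)%:E)%E /
  fine (\int[@lebesgue_measure R]_(l in Lam) (w l)%:E)%E.

Section weighted_value.
Context {R : realType} {n m : nat}.
Variables (hatc : 'cV[R]_n) (C : 'M[R]_(n, m)).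
Variables (Lam : set R) (w : R -> R).
Hypotheses (mLam : measurable Lam) (Lam_ge0 : Lam `<=` [set l | 0 <= l])
           (w_ge0 : forall l, Lam l -> 0 <= w l)
           (int_w : (@lebesgue_measure R).-integrable Lam (fun l => (w l)%:E))
           (int_lw : (@lebesgue_measure R).-integrable Lam (fun l => (l * w l)%:E)).

Let W := (\int[@lebesgue_measure R]_(l in Lam) (w l)%:E)%E.
Let L := (\int[@lebesgue_measure R]_(l in Lam) (l * w l)%:E)%E.

Let W_fin : W \is a fin_num. Proof. exact: integrable_fin_num. Qed.
Let L_fin : L \is a fin_num. Proof. exact: integrable_fin_num. Qed.

Lemma mean_lambda_ge0 : 0 <= mean_lambda Lam w.
Proof.
by apply: divr_ge0; apply: fine_ge0; apply: integral_ge0 => l Ll;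
  rewrite lee_fin ?mulr_ge0 ?w_ge0 ?Lam_ge0.
Qed.

Lemma valf_affine x : valf hatc C Lam w x =
  (fine W * dotv hatc (vec01 R x) + fine L * robslope C x)%:E.
Proof.
rewrite /valf EFinD !EFinM (fineK W_fin) (fineK L_fin).
rewrite [(W * _)%E]muleC [(L * _)%E]muleC -!integralZl //.
rewrite -integralD //; try exact: integrableZl.
apply: eq_integral => l /set_mem Ll; rewrite robvalE ?Lam_ge0 //.
by rewrite -!EFinM -EFinD; congr (_%:E); ring.
Qed.

Lemma valfE x : valf hatc C Lam w x =
  (fine W * robval hatc C (mean_lambda Lam w) x)%:E.
Proof.
rewrite valf_affine robvalE ?mean_lambda_ge0 // /mean_lambda -/W -/L.
have [W0|W_neq0] := eqVneq (fine W) 0.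
  have L0 : L = 0%E.
    apply: integral_mul_eq0 (measurable_int _ int_lw) _ => //.
      exact: measurable_int int_w.
    by change (W = 0%E); rewrite -(fineK W_fin) W0.
  by rewrite W0 L0 /= !mul0r addr0.
by congr (_%:E); field.
Qed.

End weighted_value.

Theorem theorem2 (R : realType) (n m : nat) (X : {set {ffun 'I_n -> bool}})
  (hatc : 'cV[R]_n) (C : 'M[R]_(n, m)) (Lam : set R) (w : R -> R) :
  (exists x0, x0 \in X) ->
  measurable Lam ->
  Lam `<=` [set l | 0 <= l] ->
  (forall l, Lam l -> 0 <= w l) ->
  (@lebesgue_measure R).-integrable Lam (fun l => (w l)%:E) ->
  (@lebesgue_measure R).-integrable Lam (fun l => (l * w l)%:E) ->
  exists lam' : R, 0 <= lam' /\
    forall x, is_opt X (robval hatc C lam') x ->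
              is_opt X (valf hatc C Lam w) x.
Proof.
move=> _ mLam Lam_ge0 w_ge0 int_w int_lw.
exists (mean_lambda Lam w); split; first exact: mean_lambda_ge0.
move=> x; apply: is_opt_homo => y z le_yz.
rewrite !(valfE hatc C Lam w mLam Lam_ge0 w_ge0 int_w int_lw) lee_fin.
rewrite ler_wpM2l //; apply/fine_ge0/integral_ge0 => l Ll.
by rewrite lee_fin w_ge0.
Qed.
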